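(* Suppose that $\mathcal G$ is a space group and $\mathcal R\subset\mathcal G$ has Property 2. Then $\ker(\|\cdot\|_{\mathcal R})=U_{\mathrm{trans}}$.
   Context: Euclidean group: $\mathrm E(n)$ consists of pairs $(A|b)$, $A\in\mathrm O(n)$, $b\in\mathbb R^n$, acting by $(A|b)\cdot x=Ax+b$, product $(A_1|b_1)(A_2|b_2)=(A_1A_2|b_1+A_1b_2)$; $\mathrm{rot}(A|b)=A$. A space group in $\mathrm E(n)$ is a discrete subgroup (all orbits discrete) containing $n$ translations $(I|b)$ with linearly independent $b$'s. Standing setting: $d=d_1+d_2$; $\mathcal S<\mathrm E(d_2)$ is a space group with translation subgroup $\mathcal T_{\mathcal S}$; $A\oplus(B|b)=(\mathrm{diag}(A,B)|(0,b))$; $\mathcal G$ is a discrete subgroup of $\mathrm E(d)$ contained in $\{A\oplus s:A\in\mathrm O(d_1),s\in\mathcal S\}$ projecting onto $\mathcal S$; $\mathcal T\subset\mathcal G$ maps bijectively onto $\mathcal T_{\mathcal S}$. There is $m_0\in\mathbb N$ such that $\mathcal T^N=\{t^N:t\in\mathcal T\}$ is a normal subgroup iff $N\in\mathcal M=m_0\mathbb N$, then isomorphic to $\mathbb Z^{d_2}$ of finite index; $\mathcal C_N$ is a fixed set of representatives of $\mathcal G/\mathcal T^N$. $U_{\mathrm{per}}$: maps $u:\mathcal G\to\mathbb R^d$ that are $\mathcal T^N$-periodic for some $N\in\mathcal M$. $x_0\in\mathbb R^d$ with $g\mapsto g\cdot x_0$ injective; $d_{\mathrm{aff}}=\dim\mathrm{aff}(\mathcal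 G\cdot x_0)$; assumed $\mathcal G\cdot x_0\subset\{0_{d-d_{\mathrm{aff}}}\}\times\mathbb R^{d_{\mathrm{aff}}}$ and $\mathcal G$ acts trivially on $\mathbb R^{d-d_{\mathrm{aff}}}\times\{0\}$. $U_{\mathrm{iso}}(\mathcal R)$: maps $v:\mathcal R\to\mathbb R^d$ with $a\in\mathbb R^d$, $S\in\mathrm{Skew}(d)$ such that $\mathrm{rot}(g)v(g)=a+S(g\cdot x_0-x_0)$ on $\mathcal R$. For finite $\mathcal R$ and $\mathcal T^N$-periodic $u$: $\|u\|_{\mathcal R}=\big(\frac1{|\mathcal C_N|}\sum_{g\in\mathcal C_N}\mathrm{dist}(u(g\,\cdot)|_{\mathcal R},U_{\mathrm{iso}}(\mathcal R))^2\big)^{1/2}$. $U_{\mathrm{trans}}$ is the set of maps $u:\mathcal G\to\mathbb R^d$ such that there is $a\in\mathbb R^d$ with $\mathrm{rot}(g)u(g)=a$ for all $g\in\mathcal G$. Property 1: $\mathcal R$ finite, $\mathrm{id}\in\mathcal R$, $\mathrm{aff}(\mathcal R\cdot x_0)=\mathrm{aff}(\mathcal G\cdot x_0)$. Property 2: $\mathcal R$ finite, and there are $\mathcal R',\mathcal R''$ with $\mathrm{id}\in\mathcal R'$, $\mathcal R'$ generating $\mathcal G$, $\mathcal R''$ with Property 1, and $\{gh:g\in\mathcal R',h\in\mathcal R''\}\subset\mathcal R$. *)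

From mathcomp Require Import all_boot all_order all_algebra.
From mathcomp Require Import boolp classical_sets reals.
Set Implicit Arguments. Unset Strict Implicit. Unset Printing Implicit Defensive.
Import Order.TTheory GRing.Theory Num.Theory.
Local Open Scope ring_scope.
Local Open Scope classical_set_scope.

Section Euclid.
Variables (R : realType) (d : nat).

(* An element (A|b) of E(d), acting by x |-> A x + b on column vectors. *)
Definition Eucl := ('M[R]_d * 'cV[R]_d)%type.

Definition orthogonal (A : 'M[R]_d) : Prop := A^T *m A = 1%:M.
Definition skew (S : 'M[R]_d) : Prop := S^T = - S.

Definition rot (g : Eucl) : 'M[R]_d := g.1.
Definition act (g : Eucl) (x : 'cV[R]_d) : 'cV[R]_d := g.1 *m x + g.2.
Definition emul (g h : Eucl) : Eucl := (g.1 *m h.1, g.2 + g.1 *m h.2).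
Definition eid : Eucl := (1%:M, 0).
Definition einv (g : Eucl) : Eucl := (invmx g.1, - (invmx g.1 *m g.2)).
Definition epow (g : Eucl) (N : nat) : Eucl := iter N (emul g) eid.

Definition sqnorm (v : 'cV[R]_d) : R := \sum_i (v i 0) ^+ 2.

Definition subgroup (G : Eucl -> Prop) : Prop :=
  [/\ G eid, (forall g h, G g -> G h -> G (emul g h)) &
      (forall g, G g -> G (einv g))].

Definition discrete_orbits (G : Eucl -> Prop) : Prop :=
  forall x g, G g -> exists2 e : R, 0 < e &
    forall h, G h -> sqnorm (act h x - act g x) < e -> act h x = act g x.

Definition space_group (G : Eucl -> Prop) : Prop :=
  [/\ forall g, G g -> orthogonal g.1,
      subgroup G, discrete_orbits G &
      exists B : 'M[R]_d, B \in unitmx /\ forall i, G (1%:M, col i B)].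

Definition transl (G : Eucl -> Prop) (g : Eucl) : Prop := G g /\ g.1 = 1%:M.
Definition TN (G : Eucl -> Prop) (N : nat) (g : Eucl) : Prop :=
  exists2 t, transl G t & g = epow t N.

Definition normal_sub (G H : Eucl -> Prop) : Prop :=
  [/\ forall h, H h -> G h, subgroup H &
      forall g h, G g -> H h -> H (emul (emul g h) (einv g))].

Definition inM (G : Eucl -> Prop) (N : nat) : Prop :=
  (0 < N)%N /\ normal_sub G (TN G N).

Definition reps (G : Eucl -> Prop) (N : nat) (C : seq Eucl) : Prop :=
  [/\ uniq C, (forall c, c \in C -> G c),
      (forall g, G g -> exists2 c, c \in C & exists2 t, TN G N t & g = emul c t) &
      (forall c c', c \in C -> c' \in C ->
        (exists2 t, TN G N t & c' = emul c t) -> c = c')].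

(* maps u : G -> R^d are represented by functions on Eucl (values off G irrelevant) *)
Definition periodic (G : Eucl -> Prop) (N : nat) (u : Eucl -> 'cV[R]_d) : Prop :=
  forall t g, TN G N t -> G g -> u (emul t g) = u g.

Definition Uper (G : Eucl -> Prop) (u : Eucl -> 'cV[R]_d) : Prop :=
  exists2 N, inM G N & periodic G N u.

Definition Utrans (G : Eucl -> Prop) (u : Eucl -> 'cV[R]_d) : Prop :=
  exists a : 'cV[R]_d, forall g, G g -> rot g *m u g = a.

Definition Uiso (x0 : 'cV[R]_d) (Rs : seq Eucl) (v : Eucl -> 'cV[R]_d) : Prop :=
  exists a : 'cV[R]_d, exists2 S : 'M[R]_d, skew S &
    forall h, h \in Rs -> rot h *m v h = a + S *m (act h x0 - x0).

Definition distsq (x0 : 'cV[R]_d) (Rs : seq Eucl) (u : Eucl -> 'cV[R]_d) (g : Eucl) : R :=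
  inf [set r | exists2 v, Uiso x0 Rs v &
         r = \sum_(h <- undup Rs) sqnorm (u (emul g h) - v h)].

Definition dist (x0 : 'cV[R]_d) (Rs : seq Eucl) (u : Eucl -> 'cV[R]_d) (g : Eucl) : R :=
  Num.sqrt (distsq x0 Rs u g).

Definition normR (x0 : 'cV[R]_d) (Rs : seq Eucl) (C : seq Eucl) (u : Eucl -> 'cV[R]_d) : R :=
  Num.sqrt ((size C)%:R^-1 * \sum_(g <- C) (dist x0 Rs u g) ^+ 2).

Definition aff (P : 'cV[R]_d -> Prop) (x : 'cV[R]_d) : Prop :=
  exists (n : nat) (p : 'I_n -> 'cV[R]_d) (l : 'I_n -> R),
    [/\ forall i, P (p i), \sum_i l i = 1 & x = \sum_i l i *: p i].

Definition orbit_of (Rs : Eucl -> Prop) (x0 : 'cV[R]_d) (y : 'cV[R]_d) : Prop :=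
  exists2 g, Rs g & y = act g x0.

Inductive gen (Rs : seq Eucl) : Eucl -> Prop :=
  | gen_id : gen Rs eid
  | gen_in g : g \in Rs -> gen Rs g
  | gen_mul g h : gen Rs g -> gen Rs h -> gen Rs (emul g h)
  | gen_inv g : gen Rs g -> gen Rs (einv g).

Definition property1 (G : Eucl -> Prop) (x0 : 'cV[R]_d) (Rs : seq Eucl) : Prop :=
  eid \in Rs /\
  forall y, aff (orbit_of (fun g => g \in Rs) x0) y <-> aff (orbit_of G x0) y.

Definition property2 (G : Eucl -> Prop) (x0 : 'cV[R]_d) (Rs : seq Eucl) : Prop :=
  exists (R1 R2 : seq Eucl),
    [/\ (forall g, g \in R1 -> G g) /\ (forall g, g \in R2 -> G g),
        eid \in R1, (forall g, G g <-> gen R1 g),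
        property1 G x0 R2 &
        (forall g h, g \in R1 -> h \in R2 -> emul g h \in Rs)].

End Euclid.

From Pilot Require Import Defs.
From HB Require Import structures.
From mathcomp Require Import all_boot all_order all_algebra.
From mathcomp Require Import boolp classical_sets reals.
Import Order.TTheory GRing.Theory Num.Theory.
Local Open Scope ring_scope.
Local Open Scope classical_set_scope.

(* Writing w g := rot(g) u(g), the condition u(g .)|_R in U_iso(R) says that
   w(g h) = Phi_g (g h x0) for h in R, with Phi_g affine.  If ||u||_R = 0 this
   holds exactly at every representative (the maps of the form
   h |-> rot(h)^T (a + S (h x0 - x0)) form a closed subspace), hence at every g
   in G by periodicity.  Since R contains R' R'' and R'' x0 affinely spans
   aff(G x0), the maps Phi_g and Phi_(g r), r in R', agree on aff(G x0); as R'
   generates G, a single affine Phi interpolates w on all of G.  Periodicity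
   under the lattice T^N kills the linear part of Phi, so w is constant, i.e.
   u is in U_trans.  Conversely u in U_trans is T-periodic and every u(g .)|_R
   lies in U_iso(R) with S = 0. *)

Lemma linear_rV_mulmx {R : pzRingType} {p m : nat} {L : 'rV[R]_p -> 'rV[R]_m} :
  linear L -> exists M, forall x, L x = x *m M.
Proof.
move=> linL.
pose f : {linear 'rV[R]_p -> 'rV[R]_m} :=
  HB.pack L (GRing.isLinear.Build _ _ _ _ L linL).
by exists (lin1_mx f) => x; rewrite mul_rV_lin1.
Qed.

(* The row space of [M] is closed: the cokernel map is a bounded functional. *)
Lemma submx_of_approx {R : realFieldType} {p m : nat}
    (M : 'M[R]_(p, m)) (y : 'rV[R]_m) :
  (forall e : R, 0 < e -> exists x : 'rV_p, forall j, `|(y - x *m M) 0 j| < e) ->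
  (y <= M)%MS.
Proof.
move=> approx; rewrite submxE; apply/eqP/matrixP => i j; rewrite ord1 [RHS]mxE.
set K := cokermx M; pose C := 1 + \sum_k `|K k j|.
have C_gt0 : 0 < C by rewrite ltr_pwDl // sumr_ge0.
apply/eqP; rewrite -normr_le0; apply/ler_addgt0Pr => e e_gt0; rewrite add0r.
have [x Hx] := approx (e / C) (divr_gt0 e_gt0 C_gt0).
have -> : (y *m K) 0 j = ((y - x *m M) *m K) 0 j.
  by rewrite mulmxBl -mulmxA mulmx_coker mulmx0 subr0.
rewrite mxE (le_trans (ler_norm_sum _ _ _)) //.
apply: le_trans (_ : e / C * \sum_k `|K k j| <= e).
  rewrite mulr_sumr; apply: ler_sum => k _; rewrite normrM ler_wpM2r //.
  exact/ltW/Hx.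
by rewrite mulrAC ler_pdivrMr // ler_wpM2l ?(ltW e_gt0) // lerDr.
Qed.

Lemma mulmx_unit_cols_eq0 {R : comUnitRingType} {m n : nat}
    (A : 'M[R]_(m, n)) (B : 'M[R]_n) :
  B \in unitmx -> (forall i, A *m col i B = 0) -> A = 0.
Proof.
move=> B_unit AB0.
suff AB : A *m B = 0 by rewrite -[A](mulmxK B_unit) AB mul0mx.
apply/matrixP => i j; have := congr1 (fun v : 'cV_m => v i 0) (AB0 j).
by rewrite colE mulmxA -colE !mxE.
Qed.

Section EuclideanGroup.
Context {R : realType} {d : nat}.
Implicit Types (g h k : Eucl R d) (x : 'cV[R]_d).

Lemma emulA g h k : emul (emul g h) k = emul g (emul h k).
Proof. by rewrite /emul /= !mulmxA mulmxDr addrA mulmxA. Qed.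

Lemma emul1g g : emul (eid R d) g = g.
Proof. by case: g => A b; rewrite /emul /= !mul1mx add0r. Qed.

Lemma emulg1 g : emul g (eid R d) = g.
Proof. by case: g => A b; rewrite /emul /= mulmx1 mulmx0 addr0. Qed.

Lemma emulVg g : g.1 \in unitmx -> emul (einv g) g = eid R d.
Proof.
by case: g => A b /= A_unit; rewrite /emul /einv /eid /= mulVmx // addNr.
Qed.

Lemma emulgV g : g.1 \in unitmx -> emul g (einv g) = eid R d.
Proof.
case: g => A b /= A_unit; rewrite /emul /einv /eid /= mulmxV // mulmxN.
by rewrite mulmxA mulmxV // mul1mx subrr.
Qed.

Lemma act_emul g h x : act (emul g h) x = act g (act h x).
Proof. by rewrite /act /emul /= mulmxDr mulmxA [g.2 + _]addrC addrA. Qed.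

Lemma act_eid x : act (eid R d) x = x.
Proof. by rewrite /act /= mul1mx addr0. Qed.

Lemma act_affine_comb g n (l : 'I_n -> R) (p : 'I_n -> 'cV[R]_d) :
  \sum_i l i = 1 -> act g (\sum_i l i *: p i) = \sum_i l i *: act g (p i).
Proof.
move=> l1; rewrite /act mulmx_sumr.
under [RHS]eq_bigr do rewrite scalerDr.
rewrite big_split /= -scaler_suml l1 scale1r; congr (_ + _).
by apply: eq_bigr => i _; rewrite scalemxAr.
Qed.

Lemma epow_transl g N : g.1 = 1%:M -> epow g N = (1%:M, g.2 *+ N).
Proof.
move=> g1; elim: N => [|N IH]; first by rewrite /epow /= mulr0n.
by rewrite /epow iterS -/(epow g N) IH /emul g1 mulmx1 mul1mx mulrS.
Qed.

Lemma orthogonal_unitmx (A : 'M[R]_d) : Defs.orthogonal A -> A \in unitmx.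
Proof. by move/mulmx1_unit => []. Qed.

Lemma orthogonal_mulmx_tr (A : 'M[R]_d) : Defs.orthogonal A -> A *m A^T = 1%:M.
Proof. exact: mulmx1C. Qed.

Lemma sqnorm_ge0 x : 0 <= sqnorm x.
Proof. by apply: sumr_ge0 => i _; apply: sqr_ge0. Qed.

Lemma sqnorm_lt_entry x i (e : R) : 0 < e -> sqnorm x < e ^+ 2 -> `|x i 0| < e.
Proof.
move=> e_gt0 lt_x_e.
rewrite -(ltr_pXn2r (_ : 0 < 2)%N) ?nnegrE ?normr_ge0 ?(ltW e_gt0) //.
rewrite real_normK ?num_real // (le_lt_trans _ lt_x_e) // /sqnorm (bigD1 i) //=.
by rewrite lerDl sumr_ge0 // => j _; apply: sqr_ge0.
Qed.

End EuclideanGroup.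

Section Distance.
Context {R : realType} {d : nat}.
Variables (x0 : 'cV[R]_d) (Rs : seq (Eucl R d)).
Implicit Types (u v : Eucl R d -> 'cV[R]_d) (g : Eucl R d).

(* [U_iso] without skew-symmetry of [S]: the closure argument only yields this,
   and the rest of the proof does not need more. *)
Definition Uaff v : Prop :=
  exists (a : 'cV[R]_d) (S : 'M[R]_d),
    forall h, h \in Rs -> Defs.rot h *m v h = a + S *m (act h x0 - x0).

Lemma Uiso0 : Uiso x0 Rs (fun=> 0).
Proof.
exists 0; exists 0; first by rewrite /Defs.skew trmx0 oppr0.
by move=> h _; rewrite mulmx0 mul0mx addr0.
Qed.

Let dist_set u g := [set r | exists2 v, Uiso x0 Rs v &
  r = \sum_(h <- undup Rs) sqnorm (u (emul g h) - v h)].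

Lemma dist_set_neq0 u g : dist_set u g !=set0.
Proof.
exists (\sum_(h <- undup Rs) sqnorm (u (emul g h) - 0)), (fun=> 0) => //.
exact: Uiso0.
Qed.

Lemma distsq_ge0 u g : 0 <= distsq x0 Rs u g.
Proof.
apply: lb_le_inf; first exact: dist_set_neq0.
by move=> r [v _ ->]; apply: sumr_ge0 => h _; apply: sqnorm_ge0.
Qed.

Lemma distsq_eq0 u g v : Uiso x0 Rs v ->
  (forall h, h \in Rs -> u (emul g h) = v h) -> distsq x0 Rs u g = 0.
Proof.
move=> iso_v uv; apply/le_anti; rewrite distsq_ge0 andbT.
apply: ge_inf.
  by exists 0 => r [v' _ ->]; apply: sumr_ge0 => h _; apply: sqnorm_ge0.
exists v => //; rewrite big1_seq // => h /andP[_]; rewrite mem_undup => /uv ->.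
by rewrite subrr /sqnorm big1 // => i _; rewrite mxE expr0n.
Qed.

Lemma normR_eq0 C u : C != [::] ->
  normR x0 Rs C u = 0 <-> forall c, c \in C -> distsq x0 Rs u c = 0.
Proof.
move=> C_neq0; have size_gt0 : (0 < size C)%N by case: C C_neq0.
rewrite /normR; under eq_bigr do rewrite /dist sqr_sqrtr ?distsq_ge0 //.
split=> [/eqP|dist0]; last first.
  by rewrite big1_seq ?mulr0 ?sqrtr0 // => c /andP[_ /dist0].
rewrite sqrtr_eq0 pmulr_rle0 ?invr_gt0 ?ltr0n // => sum_le0 c cC.
have /eqP : \sum_(c <- C) distsq x0 Rs u c = 0.
  by apply/le_anti; rewrite sum_le0 sumr_ge0 // => c' _; apply: distsq_ge0.
by rewrite psumr_eq0 => [/allP/(_ c cC)/eqP|c' _]; last exact: distsq_ge0.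
Qed.

Lemma distsq0_approx u g : distsq x0 Rs u g = 0 ->
  forall e : R, 0 < e -> exists2 v, Uiso x0 Rs v &
    forall h i, h \in Rs -> `|(u (emul g h) - v h) i 0| < e.
Proof.
move=> dist0 e e_gt0.
have lt_inf : distsq x0 Rs u g < e ^+ 2 by rewrite dist0 exprn_gt0.
have [r [v iso_v ->] lt_e] := inf_lt (dist_set_neq0 u g) lt_inf.
exists v => // h i hRs; apply: sqnorm_lt_entry => //; apply: le_lt_trans lt_e.
rewrite (bigD1_seq h) ?mem_undup ?undup_uniq //= lerDl.
by apply: sumr_ge0 => h' _; apply: sqnorm_ge0.
Qed.

Hypothesis orthRs : forall h, h \in Rs -> Defs.orthogonal h.1.

Let n := size (undup Rs).
Let Rs_at (k : 'I_n) := nth (eid R d) (undup Rs) k.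

Lemma Rs_at_in k : Rs_at k \in Rs.
Proof. by rewrite -mem_undup mem_nth. Qed.

Lemma Rs_at_onto h : h \in Rs -> exists k, Rs_at k = h.
Proof.
rewrite -mem_undup -index_mem => h_in.
by exists (Ordinal h_in); rewrite /Rs_at nth_index // -index_mem.
Qed.

(* A row [x] is a flattened parameter pair (a, S) of an element of [Uaff]. *)
Let param_a (x : 'rV[R]_(d + d * d)) : 'cV[R]_d := (lsubmx x)^T.
Let param_S (x : 'rV[R]_(d + d * d)) : 'M[R]_d := vec_mx (rsubmx x).
Let predicted_row x k : 'rV[R]_d :=
  ((Defs.rot (Rs_at k))^T
     *m (param_a x + param_S x *m (act (Rs_at k) x0 - x0)))^T.
Let predicted x : 'M[R]_(n, d) := \matrix_k predicted_row x k.
Let values v : 'M[R]_(n, d) := \matrix_k (v (Rs_at k))^T.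

Lemma predicted_linear : linear (fun x => mxvec (predicted x)).
Proof.
move=> c x y /=; rewrite -linearP; congr mxvec; apply/row_matrixP => k.
rewrite linearP /= !rowK /predicted_row; apply: trmx_inj.
rewrite linearP /= !trmxK /param_a /param_S !linearP /=.
move: (act (Rs_at k) x0 - x0) (Defs.rot (Rs_at k))^T => w A.
by rewrite mulmxDl -scalemxAl !mulmxDr -!scalemxAr scalerDr addrACA.
Qed.

Lemma Uiso_predicted v : Uiso x0 Rs v -> exists x, predicted x = values v.
Proof.
move=> [a [S _ iso_v]]; exists (row_mx a^T (mxvec S)).
apply/row_matrixP => k; rewrite !rowK /predicted_row; congr trmx.
rewrite /param_a /param_S row_mxKl row_mxKr trmxK mxvecK -iso_v ?Rs_at_in //.
by rewrite mulmxA orthRs ?Rs_at_in // mul1mx.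
Qed.

Lemma predicted_Uaff x v : values v = predicted x -> Uaff v.
Proof.
move=> vx; exists (param_a x), (param_S x) => h /[dup] hRs /Rs_at_onto [k <-].
have /trmx_inj -> : (v (Rs_at k))^T = predicted_row x k.
  by have := congr1 (row k) vx; rewrite !rowK.
by rewrite mulmxA orthogonal_mulmx_tr ?mul1mx //; apply/orthRs/Rs_at_in.
Qed.

Lemma distsq0_Uaff u g : distsq x0 Rs u g = 0 -> Uaff (fun h => u (emul g h)).
Proof.
move=> dist0; have [M predM] := linear_rV_mulmx predicted_linear.
have : (mxvec (values (fun h => u (emul g h))) <= M)%MS.
  apply: submx_of_approx => e e_gt0.
  have [v iso_v approx] := distsq0_approx _ _ dist0 _ e_gt0.
  have [x xv] := Uiso_predicted _ iso_v.
  exists x => j; rewrite -predM xv -linearB /=.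
  case/mxvec_indexP: j => k i; rewrite mxvecE !mxE.
  by have := approx (Rs_at k) i (Rs_at_in k); rewrite !mxE.
by case/submxP => x; rewrite -predM => /(can_inj mxvecK)/predicted_Uaff.
Qed.

End Distance.

Section SpaceGroup.
Context {R : realType} {d : nat} {G : Eucl R d -> Prop}.
Hypothesis sgG : space_group G.
Implicit Types (g h k t : Eucl R d) (u : Eucl R d -> 'cV[R]_d).

Lemma sg_orthogonal {g} : G g -> Defs.orthogonal g.1.
Proof. by case: sgG => + _ _ _; apply. Qed.

Lemma sg_eid : G (eid R d).
Proof. by case: sgG => _ []. Qed.

Lemma sg_emul {g h} : G g -> G h -> G (emul g h).
Proof. by case: sgG => _ [] _ + _ _ _; apply. Qed.

Lemma sg_einv {g} : G g -> G (einv g).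
Proof. by case: sgG => _ [] _ _ + _ _; apply. Qed.

Lemma sg_unitmx {g} : G g -> g.1 \in unitmx.
Proof. by move/sg_orthogonal/orthogonal_unitmx. Qed.

Lemma TN1E t : TN G 1 t <-> transl G t.
Proof.
split=> [[t' tt' ->]|tt]; first by rewrite /epow /= emulg1.
by exists t => //; rewrite /epow /= emulg1.
Qed.

Lemma inM1 : inM G 1.
Proof.
split=> //; split=> [h /TN1E []||g h Gg /TN1E [Gh h1]] //.
  split=> [|g h /TN1E [Gg g1] /TN1E [Gh h1]|g /TN1E [Gg g1]]; apply/TN1E.
  - by split; [exact: sg_eid|].
  - by split; [exact: sg_emul|rewrite /emul /= g1 h1 mulmx1].
  - by split; [exact: sg_einv|rewrite /einv /= g1 invmx1].
apply/TN1E; split; first by apply: sg_emul; [apply: sg_emul|apply: sg_einv].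
by rewrite /emul /einv /= h1 mulmx1 mulmxV // sg_unitmx.
Qed.

Lemma Utrans_Uper u : Utrans G u -> Uper G u.
Proof.
case=> a ua; exists 1%N => [|t g /TN1E [Gt t1] Gg]; first exact: inM1.
have orth_g := sg_orthogonal Gg.
have rot_tg : Defs.rot (emul t g) = g.1 by rewrite /Defs.rot /emul /= t1 mul1mx.
have eq_rot : Defs.rot (emul t g) *m u (emul t g) = Defs.rot g *m u g.
  by rewrite !ua //; exact: sg_emul.
rewrite rot_tg in eq_rot.
by rewrite -[LHS]mul1mx -orth_g -mulmxA eq_rot mulmxA orth_g mul1mx.
Qed.

Context {x0 : 'cV[R]_d} {Rs : seq (Eucl R d)}.
Hypothesis RsG : forall h, h \in Rs -> G h.

Lemma Utrans_distsq0 u c : Utrans G u -> G c -> distsq x0 Rs u c = 0.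
Proof.
case=> a ua Gc; apply: (distsq_eq0 _ _ _ _ (fun h => u (emul c h))) => //.
exists ((Defs.rot c)^T *m a), 0; first by rewrite /Defs.skew trmx0 oppr0.
move=> h hRs; rewrite mul0mx addr0 -(ua _ (sg_emul Gc (RsG _ hRs))).
by rewrite /Defs.rot /= !mulmxA (sg_orthogonal Gc) mul1mx.
Qed.

(* If g = c t with t in T^N, then u (g h) = u (c h) since g h = (c t c^-1) (c h)
   and c t c^-1 lies in the normal subgroup T^N. *)
Lemma Uaff_periodic {N C u} : inM G N -> reps G N C -> periodic G N u ->
  (forall c, c \in C -> Uaff x0 Rs (fun h => u (emul c h))) ->
  forall g, G g -> Uaff x0 Rs (fun h => u (emul g h)).
Proof.
move=> [_ [_ _ TN_normal]] [_ CG cover _] per Uaff_C g Gg.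
have [c cC [t tT ->]] := cover g Gg; have Gc := CG c cC.
have [a [S Uaff_c]] := Uaff_C c cC; exists a, S => h hRs.
have -> : emul (emul c t) h = emul (emul (emul c t) (einv c)) (emul c h).
  by rewrite [RHS]emulA -(emulA (einv c)) emulVg ?emul1g // sg_unitmx.
by rewrite per ?Uaff_c //; [exact: TN_normal | exact/sg_emul/RsG].
Qed.

Section Rigidity.
Context {R1 R2 : seq (Eucl R d)}.
Hypotheses (eid_R1 : eid R d \in R1) (genG : forall g, G g <-> gen R1 g).
Hypotheses (P1 : property1 G x0 R2)
  (R1R2 : forall g h, g \in R1 -> h \in R2 -> emul g h \in Rs).
Context {u : Eucl R d -> 'cV[R]_d}.
Hypothesis Uaff_G : forall g, G g -> Uaff x0 Rs (fun h => u (emul g h)).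

Let w k := Defs.rot k *m u k.
Let E := aff (orbit_of G x0).

Lemma R2_sub_Rs {h} : h \in R2 -> h \in Rs.
Proof. by move=> hR2; have := R1R2 _ _ eid_R1 hR2; rewrite emul1g. Qed.

(* [Phi] is only affine: its linear part g S g^T need not be orthogonal. *)
Lemma Uaff_act {g} : G g -> exists Phi : Eucl R d,
  forall h, h \in Rs -> w (emul g h) = act Phi (act (emul g h) x0).
Proof.
move=> Gg; have [a [S Uaff_g]] := Uaff_G _ Gg; have orth_g := sg_orthogonal Gg.
exists (g.1 *m S *m g.1^T, g.1 *m a - g.1 *m S *m g.1^T *m act g x0) => h hRs.
rewrite /w /Defs.rot /= -mulmxA Uaff_g // act_emul; move: (act h x0) => y.
rewrite /act /= addrCA -mulmxBr opprD addrACA subrr addr0 -mulmxBr.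
by rewrite -!mulmxA (mulmxA g.1^T) orth_g mul1mx mulmxDr addrC.
Qed.

Lemma aff_orbit {g} : G g -> E (act g x0).
Proof.
move=> Gg; exists 1%N, (fun=> act g x0), (fun=> 1).
by split; rewrite ?big_ord1 ?scale1r //; exists g.
Qed.

Lemma aff_orbit_act k y : G k -> E y -> E (act k y).
Proof.
move=> Gk [n [p [l [orbit_p l1 ->]]]].
exists n, (fun i => act k (p i)), l; split; rewrite ?act_affine_comb //.
move=> i; have [g Gg ->] := orbit_p i.
by exists (emul k g); rewrite ?act_emul //; exact: sg_emul.
Qed.

(* By Property 1 the points k h x0, h in R2, affinely span k E = E. *)
Lemma act_eq_on_aff {k Phi Psi} : G k ->
  (forall h, h \in R2 ->
     act Phi (act k (act h x0)) = act Psi (act k (act h x0))) ->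
  forall y, E y -> act Phi y = act Psi y.
Proof.
move=> Gk eq_R2 y Ey.
have /(proj2 P1) [n [p [l [orbit_p l1 y_comb]]]] : E (act (einv k) y).
  exact/aff_orbit_act/Ey/sg_einv.
rewrite -[y]act_eid -(emulgV _ (sg_unitmx Gk)) act_emul y_comb.
rewrite !act_affine_comb //.
by apply: eq_bigr => i _; have [h hR2 ->] := orbit_p i; rewrite eq_R2.
Qed.

Section Interpolation.
Context {Phi0 : Eucl R d}.
Hypothesis w_Phi0 : forall h, h \in Rs -> w h = act Phi0 (act h x0).

Let interpolated k :=
  forall h, h \in R2 -> w (emul k h) = act Phi0 (act (emul k h) x0).

Lemma interpolated_emulr k r : G k -> r \in R1 ->
  interpolated k <-> interpolated (emul k r).
Proof.
move=> Gk rR1; have Gkr : G (emul k r) by apply/sg_emul/genG/gen_in.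
have [Phi w_Phi] := Uaff_act Gk.
have on_E : (forall y, E y -> act Phi y = act Phi0 y) ->
    interpolated k /\ interpolated (emul k r).
  move=> Phi_Phi0; split=> h hR2.
    rewrite w_Phi ?R2_sub_Rs // Phi_Phi0 //.
    exact: aff_orbit (sg_emul Gk (RsG _ (R2_sub_Rs hR2))).
  rewrite emulA w_Phi ?R1R2 // Phi_Phi0 //.
  exact: aff_orbit (sg_emul Gk (RsG _ (R1R2 _ _ rR1 hR2))).
split=> intp; [apply: (proj2 (on_E _)) | apply: (proj1 (on_E _))].
  apply: (act_eq_on_aff Gk) => h hR2.
  by rewrite -!(act_emul k h) -w_Phi ?R2_sub_Rs ?intp.
apply: (act_eq_on_aff Gkr) => h hR2.
by rewrite -!(act_emul (emul k r) h) -intp // emulA -w_Phi ?R1R2.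
Qed.

Lemma interpolated_emul_gen {k g} : G k -> gen R1 g ->
  interpolated k <-> interpolated (emul k g).
Proof.
move=> + gen_g; elim: gen_g k => {g}
  [|r rR1|g h gen_g IHg gen_h IHh|g gen_g IHg] k Gk.
- by rewrite emulg1.
- exact: interpolated_emulr.
- have Gkg : G (emul k g) by apply/sg_emul/genG.
  by rewrite -emulA; apply: iff_trans (IHg _ Gk) (IHh _ Gkg).
- have Gkg' : G (emul k (einv g)) by apply/sg_emul/sg_einv/genG.
  have := IHg _ Gkg'; rewrite emulA emulVg ?emulg1 ?sg_unitmx //; last exact/genG.
  exact: iff_sym.
Qed.

Lemma w_act_Phi0 {g} : G g -> w g = act Phi0 (act g x0).
Proof.
move=> Gg.
have intp_eid : interpolated (eid R d).
  by move=> h hR2; rewrite emul1g w_Phi0 ?R2_sub_Rs.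
have /(interpolated_emul_gen sg_eid) [+ _] : gen R1 g by apply/genG.
by rewrite emul1g => /(_ intp_eid)/(_ _ (proj1 P1)); rewrite emulg1.
Qed.

Context {N : nat}.
Hypotheses (MN : inM G N) (perN : periodic G N u).

(* w (t^N) = w 1 by periodicity, and t^N x0 = x0 + N t.2. *)
Lemma Phi0_transl t : transl G t -> Phi0.1 *m t.2 = 0.
Proof.
move=> [Gt t1]; have tN : TN G N (epow t N) by exists t.
have GtN : G (epow t N) by case: MN => _ [+ _ _]; apply.
have u_tN : u (epow t N) = u (eid R d).
  by rewrite -[epow t N]emulg1 perN //; exact: sg_eid.
have := w_act_Phi0 GtN; rewrite /w u_tN epow_transl // /Defs.rot /= mul1mx.
have := w_act_Phi0 sg_eid; rewrite /w /Defs.rot /= mul1mx => ->.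
rewrite act_eid /act /= mul1mx mulmxDr => /addIr/esym/eqP.
rewrite -subr_eq0 addrAC subrr add0r -scaler_nat -scalemxAr scaler_eq0 pnatr_eq0.
by case: MN => N_gt0 _; rewrite -[N == 0%N]negbK -lt0n N_gt0 => /eqP.
Qed.

Lemma Phi0_linear_eq0 : Phi0.1 = 0.
Proof.
case: sgG => _ _ _ [B [B_unit GB]]; apply: (mulmx_unit_cols_eq0 _ _ B_unit) => i.
exact: (Phi0_transl _ (conj (GB i) erefl)).
Qed.

End Interpolation.

Lemma Uaff_Utrans {N} : inM G N -> periodic G N u -> Utrans G u.
Proof.
move=> MN perN; have [Phi0 w_Phi0] := Uaff_act sg_eid.
have {}w_Phi0 h : h \in Rs -> w h = act Phi0 (act h x0).
  by move=> hRs; have := w_Phi0 h hRs; rewrite emul1g.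
exists Phi0.2 => g Gg; have := w_act_Phi0 w_Phi0 Gg.
by rewrite /w /act (Phi0_linear_eq0 w_Phi0 MN perN) mul0mx add0r.
Qed.

End Rigidity.

End SpaceGroup.

Theorem corollary3p29 (R : realType) (d : nat) (G : Eucl R d -> Prop)
    (x0 : 'cV[R]_d) (Rs : seq (Eucl R d)) :
  space_group G ->
  (forall g h, G g -> G h -> act g x0 = act h x0 -> g = h) ->
  (forall h, h \in Rs -> G h) ->
  property2 G x0 Rs ->
  (forall u, Utrans G u -> Uper G u) /\
  (forall (N : nat) (C : seq (Eucl R d)) (u : Eucl R d -> 'cV[R]_d),
     inM G N -> reps G N C -> periodic G N u ->
     (normR x0 Rs C u = 0 <-> Utrans G u)).
Proof.
move=> sgG _ RsG [R1 [R2 [_ eid_R1 genG P1 R1R2]]].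
split=> [|N C u MN repC perN]; first exact: Utrans_Uper.
have C_neq0 : C != [::].
  case: repC => _ _ cover _; have [c cC _] := cover _ (sg_eid sgG).
  by apply: contraTneq cC => ->.
have orthRs h : h \in Rs -> Defs.orthogonal h.1 by move/RsG/(sg_orthogonal sgG).
apply: iff_trans (normR_eq0 _ _ _ _ C_neq0) _; split=> [dist0|uT c cC].
- apply: (Uaff_Utrans sgG RsG eid_R1 genG P1 R1R2 _ MN perN).
  apply: (Uaff_periodic sgG RsG MN repC perN) => c cC.
  exact: distsq0_Uaff _ _ orthRs _ _ (dist0 c cC).
- by apply: (Utrans_distsq0 sgG RsG _ _ uT); case: repC => _ CG _ _; apply: CG.
Qed.
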